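(* Let $0\le t_0<t$, let $\bm{D}\in\mathbb{R}^{n\times n}$ be a constant diagonal matrix with positive diagonal entries, and take $\bm{Q}_\tau=2\bm{D}$, $\bm{A}_\tau=\bm{0}$, $\hat{\bm{B}}_\tau=\sqrt2\,\bm{I}$ for all $\tau\in[t_0,t]$. Then, with $\bm{M}_{tt_0}$ defined in the context and $\omega_i:=2\sqrt{D_{ii}}$, for all $\bm{x},\bm{y}\in\mathbb{R}^n$, $$\frac12\begin{pmatrix}\bm{x}\\\bm{y}\end{pmatrix}^{\!\top}\bm{M}_{tt_0}\begin{pmatrix}\bm{x}\\\bm{y}\end{pmatrix}=\frac12\sum_{i=1}^n\frac{\omega_i(x_i^2+y_i^2)\cosh(\omega_i(t-t_0))-2\omega_i x_iy_i}{2\sinh(\omega_i(t-t_0))}.$$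
   Context: For matrix functions $\bm{A}_\tau\in\mathbb{R}^{n\times n}$, $\hat{\bm{B}}_\tau\in\mathbb{R}^{n\times m}$, $\bm{Q}_\tau\succeq\bm{0}$ on $[t_0,t]$: $\bm{\Pi}(\tau,\bm{K}_1,t)$ denotes the value at $\tau\in[t_0,t]$ of the solution, solved backward in time, of the Riccati ODE $\dot{\bm{K}}_\tau=-\bm{A}_\tau^\top\bm{K}_\tau-\bm{K}_\tau\bm{A}_\tau+\bm{K}_\tau\hat{\bm{B}}_\tau\hat{\bm{B}}_\tau^\top\bm{K}_\tau-\bm{Q}_\tau$, $\bm{K}_{\tau=t}=\bm{K}_1$. Let $\hat{\bm{A}}_\tau:=\bm{A}_\tau-\hat{\bm{B}}_\tau\hat{\bm{B}}_\tau^\top\bm{\Pi}(\tau,\bm{0},t)$, $\hat{\bm{\Phi}}_{t\tau}$ its state transition matrix from $\tau$ to $t$, $\hat{\bm{\Gamma}}_{tt_0}:=\int_{t_0}^t\hat{\bm{\Phi}}_{t\sigma}\hat{\bm{B}}_\sigma\hat{\bm{B}}_\sigma^\top\hat{\bm{\Phi}}_{t\sigma}^\top\mathrm{d}\sigma$, and $$\bm{M}_{tt_0}:=\begin{bmatrix}\hat{\bm{\Phi}}_{tt_0}^\top\hat{\bm{\Gamma}}_{tt_0}^{-1}\hat{\bm{\Phi}}_{tt_0}+\bm{\Pi}(t_0,\bm{0},t) & -\hat{\bm{\Phi}}_{tt_0}^\top\hat{\bm{\Gamma}}_{tt_0}^{-1}\\ -\hat{\bm{\Gamma}}_{tt_0}^{-1}\hat{\bm{\Phi}}_{tt_0}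 & \hat{\bm{\Gamma}}_{tt_0}^{-1}\end{bmatrix}.$$ *)

From HB Require Import structures.
From mathcomp Require Import all_boot all_order all_algebra.
From mathcomp Require Import all_classical all_reals all_analysis.
Set Implicit Arguments. Unset Strict Implicit. Unset Printing Implicit Defensive.
Import Order.TTheory GRing.Theory Num.Theory.
Import numFieldNormedType.Exports.
Local Open Scope classical_set_scope.
Local Open Scope ring_scope.

Section Defs.
Variable R : realType.

Definition coshR (z : R) : R := (expR z + expR (- z)) / 2.
Definition sinhR (z : R) : R := (expR z - expR (- z)) / 2.

(* P is (a representative of) Pi(., K1, t): the solution on [t0,t],
   solved backward from P t = K1, of the matrix Riccati ODE
   dK/dtau = -A^T K - K A + K B B^T K - Q  (stated entrywise). *)
Definition riccati_sol n m (A : R -> 'M[R]_n) (B : R -> 'M[R]_(n, m))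
  (Q : R -> 'M[R]_n) (t0 t : R) (K1 : 'M[R]_n) (P : R -> 'M[R]_n) : Prop :=
  P t = K1 /\
  forall s, t0 <= s <= t -> forall i j,
    is_derive s 1 (fun r => P r i j)
      ((- (A s)^T *m P s - P s *m A s + P s *m B s *m (B s)^T *m P s - Q s) i j).

Definition Ahat n m (A : R -> 'M[R]_n) (B : R -> 'M[R]_(n, m))
  (P : R -> 'M[R]_n) : R -> 'M[R]_n :=
  fun s => A s - B s *m (B s)^T *m P s.

Definition transition_mx n (Ah : R -> 'M[R]_n) (t0 t : R)
  (Phi : R -> R -> 'M[R]_n) : Prop :=
  (forall s, t0 <= s <= t -> Phi s s = 1%:M) /\
  forall r s, t0 <= r <= t -> t0 <= s <= t -> forall i j,
    is_derive r 1 (fun u => Phi u s i j) ((Ah r *m Phi r s) i j).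

Definition gramian n m (B : R -> 'M[R]_(n, m)) (Phi : R -> R -> 'M[R]_n)
  (t0 t : R) : 'M[R]_n :=
  \matrix_(i, j) (\int[lebesgue_measure]_(s in `[t0, t]) 
     ((Phi t s *m B s *m (B s)^T *m (Phi t s)^T) i j)).

Definition Mtt0 n (P : R -> 'M[R]_n) (Phi : R -> R -> 'M[R]_n)
  (Gam : 'M[R]_n) (t0 t : R) : 'M[R]_(n + n) :=
  let Gi := invmx Gam in
  block_mx ((Phi t t0)^T *m Gi *m Phi t t0 + P t0) (- ((Phi t t0)^T *m Gi))
           (- (Gi *m Phi t t0)) Gi.

End Defs.

From HB Require Import structures.
From mathcomp Require Import all_boot all_order all_algebra.
From mathcomp Require Import all_classical all_reals all_analysis.
From mathcomp Require Import ring lra.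
Set Implicit Arguments. Unset Strict Implicit. Unset Printing Implicit Defensive.
Import Order.TTheory GRing.Theory Num.Theory.
Import numFieldNormedType.Exports.
Local Open Scope classical_set_scope.
Local Open Scope ring_scope.

(* With A = 0, B = sqrt 2 I and Q = 2 D diagonal, everything decouples into
   coordinates.  Writing q_i = sqrt D_ii and w_i = 2 q_i, the Riccati solution is
   P(s) = diag (q_i tanh (w_i (t - s))), the transition matrix is
   Phi(r, s) = diag (cosh (w_i (t - r)) / cosh (w_i (t - s))), and integrating
   2 / cosh^2 gives the Gramian diag (tanh (w_i (t - t0)) / q_i).  The given P and
   Phi coincide with these closed forms because in both cases the difference solves
   a linear equation X' = A X + X B with bounded coefficients (for the Riccati
   equation, A = 2 P and B is twice the closed form), vanishing at one endpoint; Gronwall's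
   argument applied to the squared Frobenius norm of X shows X = 0.  The quadratic
   form of M then splits into scalar forms, which cosh^2 - sinh^2 = 1 brings into
   the stated shape. *)

Section Hyperbolic.
Variable R : realType.
Implicit Types q x y z : R.

Definition tanhR z : R := sinhR z / coshR z.

Lemma coshR_gt0 z : 0 < coshR z.
Proof. by rewrite divr_gt0 // addr_gt0 // expR_gt0. Qed.

Lemma coshR_neq0 z : coshR z != 0.
Proof. exact: lt0r_neq0 (coshR_gt0 z). Qed.

Lemma sinhR_gt0 z : 0 < z -> 0 < sinhR z.
Proof. by move=> z_gt0; rewrite divr_gt0 // subr_gt0 ltr_expR; lra. Qed.

Lemma tanhR_gt0 z : 0 < z -> 0 < tanhR z.
Proof. by move=> z_gt0; rewrite divr_gt0 ?sinhR_gt0 ?coshR_gt0. Qed.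

Lemma coshR0 : coshR 0 = 1 :> R.
Proof. by rewrite /coshR oppr0 expR0; field. Qed.

Lemma tanhR0 : tanhR 0 = 0 :> R.
Proof. by rewrite /tanhR /sinhR oppr0 subrr !mul0r. Qed.

Lemma coshR2BsinhR2 z : coshR z ^+ 2 - sinhR z ^+ 2 = 1.
Proof. by rewrite /coshR /sinhR expRN; field; rewrite lt0r_neq0 ?expR_gt0. Qed.

Lemma oneB_tanhR2 z : 1 - tanhR z ^+ 2 = (coshR z ^+ 2)^-1.
Proof.
rewrite -div1r -[in RHS](coshR2BsinhR2 z) /tanhR.
by field; rewrite coshR_neq0.
Qed.

Global Instance is_derive_coshR z : is_derive z 1 (@coshR R) (sinhR z).
Proof. by rewrite /coshR; apply: is_derive_eq; rewrite /sinhR /GRing.scale /=; field. Qed.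

Global Instance is_derive_sinhR z : is_derive z 1 (@sinhR R) (coshR z).
Proof. by rewrite /sinhR; apply: is_derive_eq; rewrite /coshR /GRing.scale /=; field. Qed.

Global Instance is_derive_tanhR z : is_derive z 1 tanhR (1 - tanhR z ^+ 2).
Proof.
have := is_deriveV (coshR_neq0 z) (is_derive_coshR z).
rewrite /tanhR => dV; apply: is_derive_eq.
by rewrite /GRing.scale /=; field; rewrite coshR_neq0.
Qed.

Lemma Rintegral_inv_coshR2 (k w a b : R) : w != 0 -> a < b ->
  \int[lebesgue_measure]_(s in `[a, b]) (k / coshR (w * (b - s)) ^+ 2)
  = k / w * tanhR (w * (b - a)).
Proof.
move=> w_neq0 ab.
pose F s := - (k / w) * tanhR (w * (b - s)).
have dF (s : R) : is_derive s 1 F (k / coshR (w * (b - s)) ^+ 2).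
  by apply: is_derive_eq; rewrite /GRing.scale /= -oneB_tanhR2; field.
have F_derivable (s : R) : derivable F s 1 by have [] := dF s.
under eq_Rintegral do rewrite -oneB_tanhR2.
rewrite /Rintegral (@continuous_FTC2 _ _ F _ _ ab).
- by rewrite -EFinB /= /F subrr mulr0 tanhR0 mulr0 sub0r mulNr opprK.
- apply: derivable_within_continuous => s _; exact: ex_derive.
- split.
  + by move=> s _; exact: F_derivable.
  + by apply/cvg_at_right_filter/differentiable_continuous/derivable1_diffP.
  + by apply/cvg_at_left_filter/differentiable_continuous/derivable1_diffP.
- by move=> s _; rewrite derive1E derive_val -oneB_tanhR2.
Qed.

Lemma coshR_sinhR_quadratic_form q z x y : q != 0 -> sinhR z != 0 ->
  ((coshR z)^-1 ^+ 2 / (tanhR z / q) + q * tanhR z) * x ^+ 2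
    - 2 * ((coshR z)^-1 / (tanhR z / q)) * x * y + y ^+ 2 / (tanhR z / q)
  = (2 * q * (x ^+ 2 + y ^+ 2) * coshR z - 2 * (2 * q) * x * y) / (2 * sinhR z).
Proof.
move=> q_neq0 s_neq0; rewrite /tanhR.
have c_neq0 := coshR_neq0 z.
rewrite -[X in (X + _) * x ^+ 2]mulr1 -(coshR2BsinhR2 z).
by field; rewrite coshR2BsinhR2 oner_neq0 q_neq0 s_neq0 c_neq0.
Qed.

End Hyperbolic.

Section Gronwall.
Variable R : realType.
Implicit Types (f df : R -> R) (a b C : R).

Lemma gronwall_eq0l f df a b C :
  (forall r, a <= r <= b -> is_derive r 1 f (df r)) ->
  (forall r, a <= r <= b -> 0 <= f r) ->
  (forall r, a <= r <= b -> `|df r| <= C * f r) ->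
  f a = 0 -> forall r, a <= r <= b -> f r = 0.
Proof.
move=> df_f f_ge0 df_le fa0 r /andP[ar rb].
pose g s := f s * expR (- C * s).
have dg s : a <= s <= b -> is_derive s 1 g (expR (- C * s) * (df s - C * f s)).
  move=> sab; have := df_f s sab => dfs.
  by apply: is_derive_eq; rewrite /GRing.scale /=; ring.
have in_oo s : s \in `]a, b[ -> a <= s <= b.
  by rewrite in_itv /= => /andP[/ltW -> /ltW ->].
have g_ge0 : 0 <= g r by rewrite mulr_ge0 ?f_ge0 ?ar ?rb ?expR_ge0.
have g_le : g r <= g a.
  apply: (ler0_derive1_le_cc (f := g) (a := a) (b := b)).
  - by move=> s /in_oo /dg [].
  - move=> s /in_oo sab; have := dg s sab => dgs; rewrite derive1E derive_val.
    rewrite pmulr_rle0 ?expR_gt0 // subr_le0.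
    exact: le_trans (ler_norm _) (df_le s sab).
  - apply: derivable_within_continuous => s.
    by rewrite in_itv /= => /dg [].
  - by rewrite in_itv /= ar rb.
  - by rewrite in_itv /= lexx (le_trans ar rb).
  - exact: ar.
rewrite /g fa0 mul0r in g_le.
have : g r == 0 by rewrite eq_le g_le g_ge0.
by rewrite mulf_eq0 (gt_eqF (expR_gt0 _)) orbF => /eqP.
Qed.

Lemma gronwall_eq0 f df a b C :
  (forall r, a <= r <= b -> is_derive r 1 f (df r)) ->
  (forall r, a <= r <= b -> 0 <= f r) ->
  (forall r, a <= r <= b -> `|df r| <= C * f r) ->
  f a = 0 \/ f b = 0 -> forall r, a <= r <= b -> f r = 0.
Proof.
move=> df_f f_ge0 df_le [fa0|fb0].
  exact: gronwall_eq0l df_f f_ge0 df_le fa0.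
have Nab s : - b <= s <= - a -> a <= - s <= b.
  by move=> /andP[bs sa]; rewrite lerNr lerNl sa bs.
move=> r rab; rewrite -[r]opprK.
apply: (@gronwall_eq0l (fun s => f (- s)) (fun s => - df (- s)) (- b) (- a) C).
- move=> s /Nab sab; have := df_f _ sab => dfs.
  by apply: is_derive_eq; rewrite /GRing.scale /=; ring.
- by move=> s /Nab; exact: f_ge0.
- by move=> s /Nab sab; rewrite normrN; exact: df_le.
- by rewrite opprK.
- by rewrite lerN2 andbC lerN2.
Qed.

End Gronwall.

Section MatrixDot.
Variable R : realFieldType.
Variables m p : nat.
Implicit Types X Y Z : 'M[R]_(m, p).

Definition mx_dot X Y : R := \sum_i \sum_j X i j * Y i j.

Lemma mx_dotDr X Y Z : mx_dot X (Y + Z) = mx_dot X Y + mx_dot X Z.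
Proof.
rewrite /mx_dot -big_split; apply: eq_bigr => i _.
by rewrite -big_split; apply: eq_bigr => j _; rewrite mxE mulrDr.
Qed.

Lemma mx_dot0 : mx_dot 0 0 = 0.
Proof. by apply: big1 => i _; apply: big1 => j _; rewrite mxE mul0r. Qed.

Lemma mx_dot_ge0 X : 0 <= mx_dot X X.
Proof. by apply: sumr_ge0 => i _; apply: sumr_ge0 => j _; exact: sqr_ge0. Qed.

Lemma sqr_entry_le_mx_dot X i j : X i j ^+ 2 <= mx_dot X X.
Proof.
have sum_ge0 i' : 0 <= \sum_j X i' j * X i' j.
  by apply: sumr_ge0 => k _; exact: sqr_ge0.
rewrite /mx_dot (bigD1 i) //= (bigD1 j) //= -addrA lerDl.
by apply: addr_ge0; apply: sumr_ge0 => k _; [exact: sqr_ge0|exact: sum_ge0].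
Qed.

Lemma normM_entry_le_mx_dot X i j k l : `|X i j * X k l| <= mx_dot X X.
Proof.
have := sqr_entry_le_mx_dot X i j; have := sqr_entry_le_mx_dot X k l.
rewrite normrM -(real_normK (num_real (X i j))) -(real_normK (num_real (X k l))).
by have := normr_ge0 (X i j); have := normr_ge0 (X k l); nra.
Qed.

Lemma mx_dot_eq0 X : mx_dot X X = 0 -> X = 0.
Proof.
move=> X0; apply/matrixP => i j; rewrite mxE.
by apply/eqP; rewrite -sqrf_eq0 eq_le sqr_ge0 andbT -X0 sqr_entry_le_mx_dot.
Qed.

Lemma sum3_const (n1 n2 n3 : nat) (c : R) :
  \sum_(i < n1) \sum_(j < n2) \sum_(k < n3) c = (n1 * n2 * n3)%:R * c.
Proof.
by rewrite !sumr_const !card_ord -!mulrnA mulr_natl (mulnC n3) (mulnC n2).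
Qed.

Lemma mx_dot_mull_le X (A : 'M[R]_m) K : (forall i k, `|A i k| <= K) ->
  `|mx_dot X (A *m X)| <= (m * p * m)%:R * K * mx_dot X X.
Proof.
move=> A_le; rewrite -mulrA -sum3_const.
apply: (le_trans (ler_norm_sum _ _ _)); apply: ler_sum => i _.
apply: (le_trans (ler_norm_sum _ _ _)); apply: ler_sum => j _.
rewrite mxE mulr_sumr; apply: (le_trans (ler_norm_sum _ _ _)); apply: ler_sum => k _.
by rewrite mulrCA normrM ler_pM ?normr_ge0 ?A_le ?normM_entry_le_mx_dot.
Qed.

Lemma mx_dot_mulr_le X (B : 'M[R]_p) K : (forall k j, `|B k j| <= K) ->
  `|mx_dot X (X *m B)| <= (m * p * p)%:R * K * mx_dot X X.
Proof.
move=> B_le; rewrite -mulrA -sum3_const.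
apply: (le_trans (ler_norm_sum _ _ _)); apply: ler_sum => i _.
apply: (le_trans (ler_norm_sum _ _ _)); apply: ler_sum => j _.
rewrite mxE mulr_sumr; apply: (le_trans (ler_norm_sum _ _ _)); apply: ler_sum => k _.
by rewrite mulrA normrM mulrC ler_pM ?normr_ge0 ?B_le ?normM_entry_le_mx_dot.
Qed.

End MatrixDot.

Section MatrixODE.
Variable R : realType.

Lemma is_derive_diag_mx n (f : 'I_n -> R -> R) (d : 'rV[R]_n) (s : R) :
  (forall k, is_derive s 1 (f k) (d 0 k)) -> forall i j,
  is_derive s 1 (fun r => diag_mx (\row_k f k r) i j) (diag_mx d i j).
Proof.
move=> df_f i j; have := df_f i => dfi.
have -> : (fun r => diag_mx (\row_k f k r) i j) = (fun r => (i == j)%:R * f i r).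
  by apply/funext => r; rewrite !mxE mulr_natl.
by apply: is_derive_eq; rewrite [RHS]mxE /GRing.scale /= -mulr_natl; ring.
Qed.

Lemma is_derive_mx_entryB m p (X Y : R -> 'M[R]_(m, p)) (dX dY : 'M[R]_(m, p))
    (s : R) i j :
  is_derive s 1 (fun r => X r i j) (dX i j) ->
  is_derive s 1 (fun r => Y r i j) (dY i j) ->
  is_derive s 1 (fun r => (X r - Y r) i j) ((dX - dY) i j).
Proof.
move=> dXij dYij.
have -> : (fun r => (X r - Y r) i j) = (fun r => X r i j - Y r i j).
  by apply/funext => r; rewrite !mxE.
by apply: is_derive_eq; rewrite !mxE.
Qed.

Lemma mx_linear_ode_eq0 m p (X : R -> 'M[R]_(m, p)) (A : R -> 'M[R]_m)
    (B : R -> 'M[R]_p) (a b KA KB : R) :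
  (forall r, a <= r <= b -> forall i j,
     is_derive r 1 (fun s => X s i j) ((A r *m X r + X r *m B r) i j)) ->
  (forall r, a <= r <= b -> forall i k, `|A r i k| <= KA) ->
  (forall r, a <= r <= b -> forall k j, `|B r k j| <= KB) ->
  X a = 0 \/ X b = 0 -> forall r, a <= r <= b -> X r = 0.
Proof.
move=> dX A_le B_le Xab r rab; apply: mx_dot_eq0.
pose C := 2 * ((m * p * m)%:R * KA + (m * p * p)%:R * KB).
apply: (@gronwall_eq0 _ (fun s => mx_dot (X s) (X s))
  (fun s => 2 * mx_dot (X s) (A s *m X s + X s *m B s)) a b C) => //.
- move=> s sab.
  have -> : (fun s => mx_dot (X s) (X s))
      = \sum_i \sum_j (fun s => X s i j * X s i j).
    apply/funext => s'; rewrite /mx_dot fct_sumE.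
    by apply: eq_bigr => i _; rewrite fct_sumE.
  rewrite /mx_dot mulr_sumr; apply: is_derive_sum => i.
  rewrite mulr_sumr; apply: is_derive_sum => j.
  have := dX s sab i j => dXij.
  by apply: is_derive_eq; rewrite /GRing.scale /=; ring.
- by move=> s _; exact: mx_dot_ge0.
- move=> s sab; rewrite mx_dotDr normrM ger0_norm // /C -mulrA ler_wpM2l // mulrDl.
  apply: (le_trans (ler_normD _ _)); apply: lerD.
    exact: mx_dot_mull_le (A_le s sab).
  exact: mx_dot_mulr_le (B_le s sab).
- by case: Xab => ->; rewrite mx_dot0; [left|right].
Qed.

Lemma derivable_bounded_cc (g : R -> R) (a b : R) : a <= b ->
  (forall r, a <= r <= b -> derivable g r 1) ->
  exists K, forall r, a <= r <= b -> `|g r| <= K.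
Proof.
move=> ab dg.
have g_cont : {within `[a, b], continuous g}.
  by apply: derivable_within_continuous => r; rewrite in_itv /= => /dg.
have [c1 _ g_le] := EVT_max ab g_cont.
have [c2 _ g_ge] := EVT_min ab g_cont.
exists (`|g c1| + `|g c2|) => r rab.
have := g_le r; have := g_ge r; rewrite in_itv /= rab => /(_ isT) ge /(_ isT) le.
have := ler_norm (g c1); have := ler_norm (- g c2); rewrite normrN.
have := normr_ge0 (g c1); have := normr_ge0 (g c2).
by rewrite ler_norml => *; apply/andP; split; lra.
Qed.

Lemma mx_derivable_bounded_cc m p (X : R -> 'M[R]_(m, p)) (a b : R) : a <= b ->
  (forall r, a <= r <= b -> forall i j, derivable (fun s => X s i j) r 1) ->
  exists K, forall r, a <= r <= b -> forall i j, `|X r i j| <= K.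
Proof.
move=> ab dX.
have /choice[K X_le] : forall ij : 'I_m * 'I_p, exists K,
    forall r, a <= r <= b -> `|X r ij.1 ij.2| <= K.
  by move=> [i j]; apply: derivable_bounded_cc => // r rab; exact: dX.
exists (\sum_ij `|K ij|) => r rab i j.
apply: le_trans (X_le (i, j) r rab) _.
rewrite (bigD1 (i, j)) //= -[X in X <= _]addr0.
by apply: lerD; [exact: ler_norm | apply: sumr_ge0 => *; exact: normr_ge0].
Qed.

End MatrixODE.

Section DiagonalMatrices.
Variable R : fieldType.
Variable n : nat.
Implicit Types (d : 'rV[R]_n) (x y : 'cV[R]_n).

Lemma is_diag_mx_eq_diag (A : 'M[R]_n) : is_diag_mx A -> A = diag_mx (\row_i A i i).
Proof.
move=> /is_diag_mxP A_diag; apply/matrixP => i j; rewrite !mxE.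
by case: eqVneq => [<-|/A_diag]; rewrite ?mulr1n ?mulr0n.
Qed.

Lemma invmx_diag d : (forall i, d 0 i != 0) ->
  invmx (diag_mx d) = diag_mx (\row_i (d 0 i)^-1).
Proof.
move=> d_neq0.
have dV : diag_mx d *m diag_mx (\row_i (d 0 i)^-1) = 1%:M.
  rewrite mulmx_diag -diag_const_mx; congr diag_mx.
  by apply/rowP => i; rewrite !mxE divff.
by rewrite -[LHS]mulmx1 -dV mulKmx // (proj1 (mulmx1_unit dV)).
Qed.

Lemma diag_mx_form x d y : (x^T *m diag_mx d *m y) 0 0 = \sum_i x i 0 * d 0 i * y i 0.
Proof. by rewrite mxE; apply: eq_bigr => i _; rewrite mul_mx_diag !mxE. Qed.

End DiagonalMatrices.

Lemma Mtt0_diag_form (R : realType) n (P : R -> 'M[R]_n) (Phi : R -> R -> 'M[R]_n)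
    (t0 t : R) (phi g p : 'rV[R]_n) (x y : 'cV[R]_n) :
  (forall i, g 0 i != 0) -> Phi t t0 = diag_mx phi -> P t0 = diag_mx p ->
  ((col_mx x y)^T *m Mtt0 P Phi (diag_mx g) t0 t *m col_mx x y) 0 0 =
  \sum_i ((phi 0 i ^+ 2 / g 0 i + p 0 i) * x i 0 ^+ 2
          - 2 * (phi 0 i / g 0 i) * x i 0 * y i 0 + y i 0 ^+ 2 / g 0 i).
Proof.
move=> g_neq0 Phi_t_t0 P_t0.
rewrite /Mtt0 Phi_t_t0 P_t0 invmx_diag // tr_diag_mx !mulmx_diag -!raddfN -raddfD /=.
rewrite tr_col_mx mul_row_block mul_row_col !mulmxDl.
rewrite mxE [X in X + _]mxE [X in _ + X]mxE !diag_mx_form -!big_split /=.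
by apply: eq_bigr => i _; rewrite !mxE; ring.
Qed.

Lemma scale_sqrt2_mul_tr (R : rcfType) n :
  (Num.sqrt 2 *: (1%:M : 'M[R]_n)) *m (Num.sqrt 2 *: 1%:M)^T = 2%:M.
Proof. by rewrite scalemx1 tr_scalar_mx -scalar_mxM -expr2 sqr_sqrtr. Qed.

Section DiagonalRiccati.
Variables (R : realType) (n : nat) (t0 t : R) (D : 'M[R]_n).
Hypotheses (t0_lt_t : t0 < t) (D_diag : is_diag_mx D) (D_gt0 : forall i, 0 < D i i).

Local Notation B := (fun _ : R => Num.sqrt 2 *: (1%:M : 'M[R]_n)).
Local Notation q i := (Num.sqrt (D i i)).
Local Notation omega i := (2 * Num.sqrt (D i i)).

Definition riccati_diag (s : R) : 'M[R]_n :=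
  diag_mx (\row_i (q i * tanhR (omega i * (t - s)))).

Definition transition_diag (r s : R) : 'M[R]_n :=
  diag_mx (\row_i (coshR (omega i * (t - r)) / coshR (omega i * (t - s)))).

Lemma riccati_rhsE (s : R) (P : 'M[R]_n) :
  - (0 : 'M[R]_n)^T *m P - P *m 0 + P *m B s *m (B s)^T *m P - 2 *: D
  = 2 *: (P *m P) - 2 *: D.
Proof.
rewrite trmx0 oppr0 mul0mx mulmx0 subr0 add0r -(mulmxA P) scale_sqrt2_mul_tr.
by rewrite mul_mx_scalar scalemxAl.
Qed.

Lemma AhatE (P : R -> 'M[R]_n) (r : R) : Ahat (fun _ => 0) B P r = - 2 *: P r.
Proof. by rewrite /Ahat scale_sqrt2_mul_tr mul_scalar_mx sub0r scaleNr. Qed.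

Lemma is_derive_riccati_diag (s : R) i j :
  is_derive s 1 (fun r => riccati_diag r i j)
    ((2 *: (riccati_diag s *m riccati_diag s) - 2 *: D) i j).
Proof.
rewrite [in X in _ - X](is_diag_mx_eq_diag D_diag) mulmx_diag -!linearZ -linearB /=.
rewrite /riccati_diag; apply: is_derive_diag_mx => k; apply: is_derive_eq.
rewrite !mxE /GRing.scale /=; set sq := Num.sqrt (D k k).
by rewrite -(sqr_sqrtr (ltW (D_gt0 k))) -/sq; ring.
Qed.

Lemma riccati_diag_end : riccati_diag t = 0.
Proof. by apply/matrixP => i j; rewrite !mxE subrr mulr0 tanhR0 mulr0 mul0rn. Qed.

Lemma riccati_diag_bounded :
  exists K, forall r, t0 <= r <= t -> forall i j, `|riccati_diag r i j| <= K.
Proof.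
apply: mx_derivable_bounded_cc (ltW t0_lt_t) _ => r _ i j.
by have [] := is_derive_riccati_diag r i j.
Qed.

Lemma riccati_solE (P : R -> 'M[R]_n) :
  riccati_sol (fun _ => 0) B (fun _ => 2 *: D) t0 t 0 P ->
  forall s, t0 <= s <= t -> P s = riccati_diag s.
Proof.
move=> [Pt dP].
have {}dP s : t0 <= s <= t -> forall i j,
    is_derive s 1 (fun r => P r i j) ((2 *: (P s *m P s) - 2 *: D) i j).
  by rewrite -(riccati_rhsE s); exact: dP.
have [KP P_le] : exists K, forall r, t0 <= r <= t -> forall i j, `|P r i j| <= K.
  apply: mx_derivable_bounded_cc (ltW t0_lt_t) _ => r rt i j.
  by have [] := dP r rt i j.
have [KPd Pd_le] := riccati_diag_bounded.
suff P_eq s : t0 <= s <= t -> P s - riccati_diag s = 0.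
  by move=> s st; apply/eqP; rewrite -subr_eq0 P_eq.
apply: (@mx_linear_ode_eq0 _ _ _ (fun r => P r - riccati_diag r)
  (fun r => 2 *: P r) (fun r => 2 *: riccati_diag r) t0 t (2 * KP) (2 * KPd)).
- move=> r rt i j.
  set Pd := riccati_diag.
  have -> : 2 *: P r *m (P r - Pd r) + (P r - Pd r) *m (2 *: Pd r)
      = (2 *: (P r *m P r) - 2 *: D) - (2 *: (Pd r *m Pd r) - 2 *: D).
    by rewrite mulmxBr mulmxBl -!scalemxAl -!scalemxAr opprB addrA subrK addrA subrK.
  exact: is_derive_mx_entryB (dP r rt i j) (is_derive_riccati_diag r i j).
- by move=> r rt i k; rewrite mxE normrM normr_nat ler_pM2l // P_le.
- by move=> r rt k j; rewrite mxE normrM normr_nat ler_pM2l // Pd_le.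
- by right; rewrite Pt riccati_diag_end subr0.
Qed.

Lemma is_derive_transition_diag (r s : R) i j :
  is_derive r 1 (fun u => transition_diag u s i j)
    ((- 2 *: riccati_diag r *m transition_diag r s) i j).
Proof.
rewrite /transition_diag /riccati_diag -scalemxAl mulmx_diag -linearZ /=.
apply: is_derive_diag_mx => k; apply: is_derive_eq.
rewrite !mxE /GRing.scale /= /tanhR.
by field; rewrite !coshR_neq0.
Qed.

Lemma transition_mxE (P : R -> 'M[R]_n) (Phi : R -> R -> 'M[R]_n) :
  riccati_sol (fun _ => 0) B (fun _ => 2 *: D) t0 t 0 P ->
  transition_mx (Ahat (fun _ => 0) B P) t0 t Phi ->
  forall r s, t0 <= s -> s <= r -> r <= t -> Phi r s = transition_diag r s.
Proof.
move=> ric [Phi_id dPhi] r s t0s sr rt.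
have [K Pd_le] := riccati_diag_bounded.
have in_t0t u : s <= u <= t -> t0 <= u <= t.
  by move=> /andP[su ->]; rewrite (le_trans t0s su).
have st : t0 <= s <= t by rewrite t0s (le_trans sr rt).
apply/eqP; rewrite -subr_eq0; apply/eqP.
apply: (@mx_linear_ode_eq0 _ _ _ (fun u => Phi u s - transition_diag u s)
  (fun u => - 2 *: riccati_diag u) (fun _ => 0) s t (2 * K) 0); last by rewrite sr rt.
- move=> u /in_t0t ut i j; rewrite mulmx0 addr0 mulmxBr.
  have := dPhi u s ut st i j; rewrite AhatE (riccati_solE ric ut) => dPhiu.
  exact: is_derive_mx_entryB dPhiu (is_derive_transition_diag u s i j).
- move=> u /in_t0t ut i k.
  by rewrite mxE normrM normrN normr_nat ler_pM2l // Pd_le.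
- by move=> u _ k j; rewrite mxE normr0.
- left; rewrite Phi_id //; apply/matrixP => i j.
  by rewrite !mxE divff ?coshR_neq0 // subrr.
Qed.

Lemma transition_mx_end (P : R -> 'M[R]_n) (Phi : R -> R -> 'M[R]_n) :
  riccati_sol (fun _ => 0) B (fun _ => 2 *: D) t0 t 0 P ->
  transition_mx (Ahat (fun _ => 0) B P) t0 t Phi ->
  forall s, t0 <= s <= t -> Phi t s = diag_mx (\row_i (coshR (omega i * (t - s)))^-1).
Proof.
move=> ric trans s /andP[t0s st].
rewrite (transition_mxE ric trans t0s st (lexx t)); congr diag_mx.
by apply/rowP => i; rewrite !mxE subrr mulr0 coshR0 div1r.
Qed.

Lemma gramianE (P : R -> 'M[R]_n) (Phi : R -> R -> 'M[R]_n) :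
  riccati_sol (fun _ => 0) B (fun _ => 2 *: D) t0 t 0 P ->
  transition_mx (Ahat (fun _ => 0) B P) t0 t Phi ->
  gramian B Phi t0 t = diag_mx (\row_i (tanhR (omega i * (t - t0)) / q i)).
Proof.
move=> ric trans; apply/matrixP => i j; rewrite !mxE.
have q_gt0 : 0 < q i by rewrite sqrtr_gt0.
transitivity (\int[lebesgue_measure]_(s in `[t0, t])
                ((i == j)%:R * 2 / coshR (omega i * (t - s)) ^+ 2)).
  apply: eq_Rintegral => s; rewrite inE /= in_itv /= => st.
  rewrite (transition_mx_end ric trans st) -(mulmxA (diag_mx _)) scale_sqrt2_mul_tr.
  rewrite mul_mx_scalar tr_diag_mx -scalemxAl mulmx_diag !mxE -mulr_natl.
  by field; rewrite coshR_neq0.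
rewrite Rintegral_inv_coshR2 // -mulr_natl; last by rewrite mulf_neq0 ?lt0r_neq0.
by field; rewrite lt0r_neq0.
Qed.

End DiagonalRiccati.

Theorem proposition3 (R : realType) (n : nat) (t0 t : R) (D : 'M[R]_n)
  (P : R -> 'M[R]_n) (Phi : R -> R -> 'M[R]_n) :
  0 <= t0 -> t0 < t ->
  is_diag_mx D -> (forall i, 0 < D i i) ->
  riccati_sol (fun _ => 0) (fun _ => Num.sqrt 2 *: (1%:M : 'M[R]_n))
    (fun _ => 2 *: D) t0 t 0 P ->
  transition_mx (Ahat (fun _ => 0) (fun _ => Num.sqrt 2 *: (1%:M : 'M[R]_n)) P)
    t0 t Phi ->
  forall x y : 'cV[R]_n,
    let M := Mtt0 P Phi
      (gramian (fun _ => Num.sqrt 2 *: (1%:M : 'M[R]_n)) Phi t0 t) t0 t in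
    let w := fun i => 2 * Num.sqrt (D i i) in
    2^-1 * ((col_mx x y)^T *m M *m col_mx x y) ord0 ord0 =
    2^-1 * \sum_(i < n)
      (w i * (x i ord0 ^+ 2 + y i ord0 ^+ 2) * coshR (w i * (t - t0))
         - 2 * w i * x i ord0 * y i ord0) / (2 * sinhR (w i * (t - t0))).
Proof.
move=> _ t0_lt_t D_diag D_gt0 ric trans x y M w.
have t0_in : t0 <= t0 <= t by rewrite lexx ltW.
have q_gt0 i : 0 < Num.sqrt (D i i) by rewrite sqrtr_gt0.
have z_gt0 i : 0 < w i * (t - t0) by rewrite mulr_gt0 ?subr_gt0 // mulr_gt0.
rewrite /M (gramianE t0_lt_t D_diag D_gt0 ric trans).
rewrite (Mtt0_diag_form _ _ _ (transition_mx_end t0_lt_t D_diag D_gt0 ric trans t0_in)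
  (riccati_solE t0_lt_t D_diag D_gt0 ric t0_in)).
  congr (_ * _); apply: eq_bigr => i _; rewrite !mxE.
  apply: coshR_sinhR_quadratic_form; apply: lt0r_neq0.
    exact: q_gt0.
  exact: sinhR_gt0 (z_gt0 i).
move=> i; rewrite mxE; apply/lt0r_neq0/divr_gt0; last exact: q_gt0.
exact: tanhR_gt0 (z_gt0 i).
Qed.
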